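(* Let $X=\{x_0,\ldots,x_m\}$, $\tilde X=\{\tilde x_1,\ldots,\tilde x_q\}$ (commuting), $c\in\mathbb{R}^q\langle\langle X\rangle\rangle$ proper and $d\in\mathbb{R}^m[[\tilde X]]$ purely improper. Consider the closed-loop system in which the Chen-Fliess series $F_c$ is in multiplicative static output feedback with the formal static map $f_d$: $y=F_c[u]$, $u=v\cdot f_d(y)$ (componentwise product), with external input $v$. Then the closed-loop system is (formally) a Chen-Fliess series $y=F_e[v]$ with generating series given by the multiplicative static feedback product $e=c\,\bar{@}\,d:=c\,\tilde\circ\,\delta_{(d^{-1}\circ c)^{\circ-1}}$, where $d^{-1}\circ c$ is the Wiener-Fliess composition product.
   Context: Chen-Fliess series: $F_c[u](t)=\sum_{\eta\in X^\ast}(c,\eta)E_\eta[u](t,t_0)$, $E_\emptyset=1$, $E_{x_i\bar\eta}[u](t,t_0)=\int_{t_0}^tu_i(\tau)E_{\bar\eta}[u](\tau,t_0)d\tau$, $u_0=1$ (formal). Formal static map: $f_d(z)=\sum_{\eta\in\tilde X^\ast}(d,\eta)z^\eta$, $z\in\mathbb{R}^q$, $z^\emptyset=1$, $z^{\tilde x_i\eta}=z_iz^\eta$. Series conventions: coefficients in $\mathbb{R}^\ell$, componentwise products, proper = zero constant term, purely improper = each component has nonzero constant term; $d^{-1}$ the componentwise Cauchy inverse in $\mathbb{R}^m[[\tilde X]]$. Shuffle product $\sqcup\!\sqcup$: bilinear, $(x_i\eta)\sqcup\!\sqcup(x_j\xi)=x_i(\eta\sqcup\!\sqcup x_j\xi)+x_j(x_i\eta\sqcup\!\sqcup\xi)$,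 $\eta\sqcup\!\sqcup\emptyset=\emptyset\sqcup\!\sqcup\eta=\eta$; $g^{\sqcup\!\sqcup-1}$ componentwise shuffle inverse. Wiener-Fliess composition for proper $c$: $d\circ c=\sum_{\tilde\eta}(d,\tilde\eta)c^{\sqcup\!\sqcup\tilde\eta}$, $c^{\sqcup\!\sqcup\emptyset}=1$, $c^{\sqcup\!\sqcup\tilde x_i\tilde\eta}=c_i\sqcup\!\sqcup c^{\sqcup\!\sqcup\tilde\eta}$; it generates $f_d\circ F_c$. Multiplicative mixed composition: $c\,\tilde\circ\,\delta_g=\sum_\eta(c,\eta)\bar\phi_g(\eta)(\mathbf 1)$, $\mathbf 1=1\emptyset$, $\bar\phi_g(x_0)(w)=x_0w$, $\bar\phi_g(x_i)(w)=x_i(g_i\sqcup\!\sqcup w)$ ($i\ge1$), multiplicative; it generates $v\mapsto F_c[v\cdot F_g[v]]$. For purely improper $g\in\mathbb{R}^m\langle\langle X\rangle\rangle$, $g^{\circ-1}$ is the unique $h$ with $h=g^{\sqcup\!\sqcup-1}\,\tilde\circ\,\delta_h$. *)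

From mathcomp Require Import all_boot all_order all_algebra.
Set Implicit Arguments. Unset Strict Implicit. Unset Printing Implicit Defensive.
Import Order.TTheory GRing.Theory Num.Theory.
Local Open Scope ring_scope.

Section FliessAlgebra.
Variable R : realFieldType.

(* letters x_0..x_m are the elements of 'I_m.+1 ; x_0 is ord0 *)
Definition word (m : nat) := seq 'I_m.+1.
(* scalar series R<<X>> : coefficient function on words *)
Definition ser (m : nat) := word m -> R.
Definition vser (m l : nat) := 'I_l -> ser m.

Definition words (m n : nat) : seq (word m) :=
  map (@tval n 'I_m.+1) (enum {: n.-tuple 'I_m.+1}).
Arguments words : clear implicits.

(* shuffle product of two words, as a list of words (with multiplicity):
   (a u') sh (b v') = a (u' sh b v') + b (a u' sh v'), and u sh [] = [] sh u = u *)
Fixpoint shw (T : Type) (u : seq T) : seq T -> seq (seq T) :=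
  match u with
  | [::] => fun v => [:: v]
  | a :: u' =>
      fix shv (v : seq T) : seq (seq T) :=
        match v with
        | [::] => [:: a :: u']
        | b :: v' => map (cons a) (shw u' v) ++ map (cons b) (shv v')
        end
  end.

Definition one_ser (m : nat) : ser m := fun w => (w == [::])%:R.
Arguments one_ser : clear implicits.

(* bilinear extension of the word shuffle to series:
   (s sh t, w) = sum_{u,v} (s,u)(t,v)(u sh v, w); only |u|+|v| = |w| contribute *)
Definition shuffle (m : nat) (s t : ser m) : ser m := fun w =>
  \sum_(k < (size w).+1) \sum_(u <- words m k) \sum_(v <- words m (size w - k))
     s u * t v * (count_mem w (shw u v))%:R.

Definition is_shuffle_inv (m : nat) (s t : ser m) : Prop :=
  forall w, shuffle s t w = one_ser m w.

Definition proper_ser (m l : nat) (c : vser m l) : Prop :=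
  forall j, c j [::] = 0.

(* phibar_g(x_0)(s) = x_0 s ; phibar_g(x_i)(s) = x_i (g_i sh s), i >= 1 *)
Definition phi_letter (m : nat) (g : vser m m) (i : 'I_m.+1) (s : ser m) : ser m :=
  fun w => match w with
           | [::] => 0
           | j :: w' =>
               if j == i then
                 match unlift ord0 i with
                 | None => s w'
                 | Some k => shuffle (g k) s w'       (* g_i = g k, k = i-1 *)
                 end
               else 0
           end.

Definition phibar (m : nat) (g : vser m m) (eta : word m) (s : ser m) : ser m :=
  foldr (phi_letter g) s eta.

(* Since phibar_g(eta)(1) is
   supported on words of length >= |eta|, the coefficient at w only involves
   |eta| <= |w| (the sum is exactly this finite sum). *)
Definition mixcomp (m l : nat) (c : vser m l) (g : vser m m) : vser m l :=
  fun j w => \sum_(k < (size w).+1) \sum_(eta <- words m k) c j eta * phibar g eta (one_ser m) w.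

(* monomials z^alpha, alpha an exponent vector *)
Definition expo (q : nat) := {ffun 'I_q -> nat}.
Definition cser (q : nat) := expo q -> R.
Definition expo0 (q : nat) : expo q := [ffun _ => 0%N].
Arguments expo0 : clear implicits.
Definition toexp (q N : nat) (b : {ffun 'I_q -> 'I_N}) : expo q := [ffun i => nat_of_ord (b i)].

Definition cauchy (q : nat) (a b : cser q) : cser q := fun al =>
  \sum_(bb : {ffun 'I_q -> 'I_(\sum_i al i)%N.+1} | [forall i, (bb i <= al i)%N])
     a (toexp bb) * b [ffun i => (al i - bb i)%N].

Definition one_cser (q : nat) : cser q := fun al => (al == expo0 q)%:R.
Arguments one_cser : clear implicits.

Definition is_cauchy_inv (q : nat) (a ainv : cser q) : Prop :=
  forall al, cauchy a ainv al = one_cser q al.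

Definition purely_improper (q l : nat) (d : 'I_l -> cser q) : Prop :=
  forall j, d j (expo0 q) <> 0.

Definition shpow (m : nat) (s : ser m) (n : nat) : ser m := iter n (shuffle s) (one_ser m).
(* c^{sh alpha} = prod_i c_i^{sh alpha_i} (shuffle is commutative) *)
Definition spow (m q : nat) (c : vser m q) (al : expo q) : ser m :=
  foldr (fun i acc => shuffle (shpow (c i) (al i)) acc) (one_ser m) (enum 'I_q).

(* d o c = sum_alpha (d,alpha) c^{sh alpha}, for proper c; c^{sh alpha} is
   supported on words of length >= |alpha|, so only |alpha| <= |w| contribute. *)
Definition wfcomp (m q l : nat) (d : 'I_l -> cser q) (c : vser m q) : vser m l :=
  fun j w => \sum_(bb : {ffun 'I_q -> 'I_(size w).+1} | (\sum_i (bb i : nat) <= size w)%N)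
     d j (toexp bb) * spow c (toexp bb) w.

End FliessAlgebra.

(* Write [mix g s] for the mixed composition s ~o delta_g, seen as a linear
   operator on scalar series.  Its left derivative along x_k (k >= 1) is the
   shuffle of g_k with a mixed composition, which makes [mix g] a morphism of
   the shuffle algebra.  The Wiener-Fliess composition d |-> d o x is likewise
   a morphism from the Cauchy to the shuffle algebra, and it commutes with
   [mix g].  Hence for e = c ~o delta_h the series
   d^{-1} o e = mix_h (d^{-1} o c) is a shuffle inverse both of
   h = mix_h ((d^{-1} o c)^{sh -1}) and of d o e, so d o e = h: e solves
   e = c ~o delta_{d o e}.  The solution is unique because the coefficient of
   a word w in c ~o delta_g only involves coefficients of g at words shorter
   than w. *)

From mathcomp Require Import all_boot all_order all_algebra zify.
From Stdlib Require Import FunctionalExtensionality.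
Set Implicit Arguments. Unset Strict Implicit. Unset Printing Implicit Defensive.
Import GRing.Theory Num.Theory.
Local Open Scope ring_scope.

Section Words.
Variables (R : realFieldType) (m : nat).

Lemma big_words k (F : word m -> R) :
  \sum_(u <- words m k) F u = \sum_(t : k.-tuple 'I_m.+1) F t.
Proof. by rewrite /words big_map big_enum. Qed.

Lemma big_words0 (F : word m -> R) : \sum_(u <- words m 0) F u = F [::].
Proof.
rewrite big_words (big_pred1 [tuple]) // => t.
by apply/esym/eqP/val_inj; case: t => [[]].
Qed.

Lemma big_wordsS k (F : word m -> R) :
  \sum_(u <- words m k.+1) F u = \sum_(b : 'I_m.+1) \sum_(u <- words m k) F (b :: u).
Proof.
under [RHS]eq_bigr => b _ do rewrite big_words.
rewrite big_words pair_big /=.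
rewrite (reindex (fun p : 'I_m.+1 * k.-tuple 'I_m.+1 => [tuple of p.1 :: p.2])) //=.
exists (fun t : k.+1.-tuple 'I_m.+1 => (thead t, behead_tuple t)).
  by move=> [b t] _ /=; rewrite theadE; congr pair; apply: val_inj.
by move=> t _; rewrite [in RHS](tuple_eta t).
Qed.

Lemma size_words k u : u \in words m k -> size u = k.
Proof. by rewrite /words => /mapP [t _ ->]; rewrite size_tuple. Qed.

Lemma big_wordsS_cons k (a : 'I_m.+1) (F : word m -> R) :
  (forall b u, b != a -> F (b :: u) = 0) ->
  \sum_(u <- words m k.+1) F u = \sum_(u <- words m k) F (a :: u).
Proof.
move=> F0; rewrite big_wordsS (bigD1 a) //= [X in _ + X]big1 ?addr0 // => b nba.
by rewrite big1 // => u _; apply: F0.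
Qed.

End Words.

Section Shuffle.
Variables (R : realFieldType) (m : nat).
Local Notation ser := (ser R m).
Local Notation sh := (@shuffle R m).
Local Notation one := (@one_ser R m).

Definition lder (a : 'I_m.+1) (s : ser) : ser := fun w => s (a :: w).

Definition agree n (s t : ser) := forall v, (size v <= n)%N -> s v = t v.

Definition order_ge n (s : ser) := forall v, (size v < n)%N -> s v = 0.

Lemma agree_le n1 n2 (s t : ser) : (n1 <= n2)%N -> agree n2 s t -> agree n1 s t.
Proof. by move=> n12 st v vn1; apply: st; apply: leq_trans n12. Qed.

Lemma agree_lder n a (s t : ser) : agree n.+1 s t -> agree n (lder a s) (lder a t).
Proof. by move=> st v vn; apply: st. Qed.

Lemma shw_nil_r (T : Type) (u : seq T) : shw u [::] = [:: u].
Proof. by case: u. Qed.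

Lemma count_mem_map_cons (a b : 'I_m.+1) w (l : seq (word m)) :
  count_mem (a :: w) (map (cons b) l) = ((b == a) * count_mem w l)%N.
Proof.
elim: l => [|x l IH] /=; first by rewrite muln0.
by rewrite IH eqseq_cons mulnDr; case: (b == a); case: (x == w).
Qed.

Lemma count_shw_cons (a : 'I_m.+1) w (u v : word m) :
  count_mem (a :: w) (shw u v) =
  ((if u is b :: u' then (b == a) * count_mem w (shw u' v) else 0) +
   (if v is c :: v' then (c == a) * count_mem w (shw u v') else 0))%N.
Proof.
case: u => [|b u']; case: v => [|c v'] //=.
- by rewrite eqseq_cons; case: (c == a); case: (v' == w).
- by rewrite shw_nil_r /= eqseq_cons addn0; case: (b == a); case: (u' == w).
- by rewrite count_cat !count_mem_map_cons.
Qed.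

Lemma shuffle_nil (s t : ser) : sh s t [::] = s [::] * t [::].
Proof. by rewrite /shuffle /= big_ord1 !big_words0 /= mulr1. Qed.

Lemma shuffle_cons (s t : ser) a w :
  sh s t (a :: w) = sh (lder a s) t w + sh s (lder a t) w.
Proof.
rewrite /shuffle /=.
under eq_bigr => k _ do under eq_bigr => u _ do under eq_bigr => v _ do
  rewrite count_shw_cons natrD mulrDr.
under eq_bigr => k _ do under eq_bigr => u _ do rewrite big_split /=.
under eq_bigr => k _ do rewrite big_split /=.
rewrite big_split /=; congr (_ + _).
- rewrite big_ord_recl /= big_words0 big1 ?add0r; last by move=> v _; rewrite mulr0.
  apply: eq_bigr => k _; rewrite /bump leq0n add1n subSS.
  rewrite (@big_wordsS_cons _ _ _ a); last first.
    by move=> b u /negbTE nba; rewrite big1 // => v _; rewrite nba mul0n mulr0.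
  by apply: eq_bigr => u _; apply: eq_bigr => v _; rewrite eqxx mul1n.
- rewrite big_ord_recr /= subnn.
  rewrite [X in _ + X]big1 ?addr0; last by move=> u _; rewrite big_words0 mulr0.
  apply: eq_bigr => k _; apply: eq_bigr => u _ /=.
  rewrite subSn ?(@big_wordsS_cons _ _ _ a) => [|b v /negbTE nba|]; last by rewrite -ltnS.
    by apply: eq_bigr => v _; rewrite eqxx mul1n.
  by rewrite nba mul0n mulr0.
Qed.

Lemma lder_shuffle (s t : ser) a :
  lder a (sh s t) = fun w => sh (lder a s) t w + sh s (lder a t) w.
Proof. by apply: functional_extensionality => w; rewrite /lder shuffle_cons. Qed.

Lemma agree_shuffle n (s s' t t' : ser) :
  agree n s s' -> agree n t t' -> agree n (sh s t) (sh s' t').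
Proof.
elim: n s s' t t' => [|n IH] s s' t t' ss' tt' [|a v] //= vn.
1,2: by rewrite !shuffle_nil ss' ?tt'.
have agree_n (x y : ser) : agree n.+1 x y -> agree n x y := agree_le (leqnSn n).
rewrite !shuffle_cons; congr (_ + _); apply: IH => //.
- exact: agree_lder ss'.
- exact: agree_n tt'.
- exact: agree_n ss'.
- exact: agree_lder tt'.
Qed.

Lemma agree_shuffler n (s t t' : ser) : agree n t t' -> agree n (sh s t) (sh s t').
Proof. exact: agree_shuffle. Qed.

Lemma order_ge_shuffle n1 n2 (s t : ser) :
  order_ge n1 s -> order_ge n2 t -> order_ge (n1 + n2) (sh s t).
Proof.
move=> s0 t0 w; elim: w n1 n2 s t s0 t0 => [|a w IH] n1 n2 s t s0 t0 /= wn.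
  rewrite shuffle_nil; case: n1 s0 wn => [|n1] s0 wn.
    by rewrite (t0 [::]) ?mulr0.
  by rewrite (s0 [::]) ?mul0r.
rewrite shuffle_cons (IH n1.-1 n2) ?(IH n1 n2.-1) ?addr0 //; try lia.
- by move=> v vn; apply: t0 => /=; lia.
- by move=> v vn; apply: s0 => /=; lia.
Qed.

Lemma shuffleC (s t : ser) : sh s t = sh t s.
Proof.
apply: functional_extensionality => w; elim: w s t => [|a w IH] s t.
  by rewrite !shuffle_nil mulrC.
by rewrite !shuffle_cons addrC; congr (_ + _); apply: IH.
Qed.

Lemma shuffle_sumr (I : Type) (r : seq I) (s : ser) (F : I -> ser) w :
  sh s (fun v => \sum_(i <- r) F i v) w = \sum_(i <- r) sh s (F i) w.
Proof.
elim: w s F => [|a w IH] s F.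
  by rewrite shuffle_nil mulr_sumr; apply: eq_bigr => i _; rewrite shuffle_nil.
rewrite shuffle_cons IH (IH s (fun i => lder a (F i))) -big_split /=.
by apply: eq_bigr => i _; rewrite shuffle_cons.
Qed.

Lemma shuffleDr (s t1 t2 : ser) w :
  sh s (fun v => t1 v + t2 v) w = sh s t1 w + sh s t2 w.
Proof.
elim: w s t1 t2 => [|a w IH] s t1 t2; first by rewrite !shuffle_nil mulrDr.
rewrite !shuffle_cons IH (IH s (lder a t1) (lder a t2)).
by rewrite -!addrA; congr (_ + _); rewrite addrCA.
Qed.

Lemma shuffleDl (s1 s2 t : ser) w :
  sh (fun v => s1 v + s2 v) t w = sh s1 t w + sh s2 t w.
Proof. by rewrite shuffleC shuffleDr !(shuffleC _ t). Qed.

Lemma shuffleZr (r : R) (s t : ser) w : sh s (fun v => r * t v) w = r * sh s t w.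
Proof.
elim: w s t => [|a w IH] s t; first by rewrite !shuffle_nil mulrCA.
by rewrite !shuffle_cons IH (IH s (lder a t)) mulrDr.
Qed.

Lemma shuffle1s (t : ser) : sh one t = t.
Proof.
apply: functional_extensionality => w; elim: w t => [|a w IH] t.
  by rewrite shuffle_nil /one_ser eqxx mul1r.
by rewrite shuffle_cons IH (@order_ge_shuffle (size w).+1 0) ?addn0 ?add0r.
Qed.

Lemma shuffles1 (s : ser) : sh s one = s.
Proof. by rewrite shuffleC shuffle1s. Qed.

Lemma shuffleA (s t u : ser) : sh (sh s t) u = sh s (sh t u).
Proof.
apply: functional_extensionality => w; elim: w s t u => [|a w IH] s t u.
  by rewrite !shuffle_nil mulrA.
by rewrite !shuffle_cons !lder_shuffle shuffleDl shuffleDr !IH addrA.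
Qed.

Lemma shuffle_inv_uniq (a b c : ser) : sh b a = one -> sh a c = one -> b = c.
Proof. by move=> ba ac; rewrite -[b]shuffles1 -ac -shuffleA ba shuffle1s. Qed.

End Shuffle.

Section MixedComposition.
Variables (R : realFieldType) (m : nat).
Local Notation ser := (ser R m).
Local Notation sh := (@shuffle R m).
Local Notation one := (@one_ser R m).

Section FixedFeedback.
Variable g : vser R m m.

Definition mix (s : ser) : ser := fun w =>
  \sum_(k < (size w).+1) \sum_(eta <- words m k) s eta * phibar g eta one w.

Lemma mixcompE l (c : vser R m l) j : mixcomp c g j = mix (c j).
Proof. by []. Qed.

Lemma order_ge_phibar eta (s : ser) : order_ge (size eta) (phibar g eta s).
Proof.
elim: eta => [|b eta IH] [|a v] //= vn.
case: (a == b) => //; case: (unlift ord0 b) => [k|]; last exact: IH.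
by apply: (@order_ge_shuffle _ _ 0 _ _ _ _ IH) => // u; rewrite ltn0.
Qed.

Lemma mix_le N (s : ser) v : (size v <= N)%N ->
  \sum_(k < N.+1) \sum_(eta <- words m k) s eta * phibar g eta one v = mix s v.
Proof.
move=> vN; rewrite /mix (bigID (fun k : 'I_N.+1 => (k < (size v).+1)%N)) /=.
rewrite [X in _ + X]big1 ?addr0; last first.
  move=> k; rewrite -leqNgt => vk.
  rewrite big_seq big1 // => eta /size_words eta_k.
  by rewrite order_ge_phibar ?mulr0 // eta_k.
by rewrite (big_ord_widen N.+1 (fun k => \sum_(eta <- words m k) s eta * phibar g eta one v)).
Qed.

Lemma mix_nil (s : ser) : mix s [::] = s [::].
Proof. by rewrite /mix /= big_ord1 big_words0 /= /one_ser eqxx mulr1. Qed.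

Lemma lder_mix a (s : ser) : lder a (mix s) =
  if unlift ord0 a is Some k then sh (g k) (mix (lder a s)) else mix (lder a s).
Proof.
apply: functional_extensionality => w.
rewrite /lder {1}/mix /= big_ord_recl /= big_words0 {2}/one_ser /= mulr0 add0r.
have peel k : \sum_(eta <- words m k.+1) s eta * phibar g eta one (a :: w) =
    \sum_(eta <- words m k) lder a s eta *
      (if unlift ord0 a is Some i then sh (g i) (phibar g eta one) w
       else phibar g eta one w).
  rewrite (@big_wordsS_cons _ _ _ a) => [|b eta /negbTE nba]; last first.
    by rewrite /= eq_sym nba mulr0.
  by apply: eq_bigr => eta _ /=; rewrite eqxx.
under eq_bigr => k _ do rewrite /bump leq0n add1n peel.
case: (unlift ord0 a) => [i|] //.
have trunc : agree (size w) (mix (lder a s)) (fun v =>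
    \sum_(k < (size w).+1) \sum_(eta <- words m k) lder a s eta * phibar g eta one v).
  by move=> v vw; rewrite mix_le.
rewrite (agree_shuffler (g i) trunc (leqnn _)).
rewrite shuffle_sumr; apply: eq_bigr => k _.
by rewrite shuffle_sumr; apply: eq_bigr => eta _; rewrite shuffleZr.
Qed.

Lemma mixD (s t : ser) w : mix (fun v => s v + t v) w = mix s w + mix t w.
Proof.
rewrite /mix -big_split; apply: eq_bigr => k _.
by rewrite -big_split; apply: eq_bigr => eta _; rewrite mulrDl.
Qed.

Lemma mix_sum (I : Type) (r : seq I) (F : I -> ser) w :
  mix (fun v => \sum_(i <- r) F i v) w = \sum_(i <- r) mix (F i) w.
Proof.
rewrite /mix.
under eq_bigr => k _ do under eq_bigr => eta _ do rewrite mulr_suml.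
by under eq_bigr => k _ do rewrite exchange_big; rewrite exchange_big.
Qed.

Lemma mixZ r (s : ser) w : mix (fun v => r * s v) w = r * mix s w.
Proof.
rewrite /mix mulr_sumr; apply: eq_bigr => k _.
by rewrite mulr_sumr; apply: eq_bigr => eta _; rewrite mulrA.
Qed.

Lemma agree_mix n (s t : ser) : agree n s t -> agree n (mix s) (mix t).
Proof.
move=> st w wn; apply: eq_bigr => k _; rewrite !big_seq; apply: eq_bigr => eta /size_words eta_k.
by rewrite st // eta_k -ltnS (leq_trans (ltn_ord k)).
Qed.

Lemma mix1 : mix one = one.
Proof.
apply: functional_extensionality => w.
rewrite /mix big_ord_recl big_words0 /= {1}/one_ser eqxx mul1r.
rewrite big1 ?addr0 // => k _; rewrite /bump leq0n add1n big_wordsS.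
by rewrite big1 // => b _; rewrite big1 // => eta _; rewrite /one_ser /= mul0r.
Qed.

Lemma mix_shuffle (s t : ser) : mix (sh s t) = sh (mix s) (mix t).
Proof.
suff agree_n n : forall s t, agree n (mix (sh s t)) (sh (mix s) (mix t)).
  by apply: functional_extensionality => w; apply: (agree_n (size w)).
elim: n => [|n IH] {}s {}t [|a v] //= vn; rewrite ?mix_nil ?shuffle_nil ?mix_nil //.
have mixD_shuffle (s1 t1 s2 t2 : ser) :
    agree n (mix (fun w => sh s1 t1 w + sh s2 t2 w))
            (fun w => sh (mix s1) (mix t1) w + sh (mix s2) (mix t2) w).
  by move=> u un; rewrite mixD !IH.
change (lder a (mix (sh s t)) v = sh (mix s) (mix t) (a :: v)).
rewrite shuffle_cons !lder_mix lder_shuffle.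
case: (unlift ord0 a) => [k|]; last by rewrite mixD_shuffle.
rewrite (agree_shuffler (g k) (mixD_shuffle _ _ _ _) vn).
by rewrite shuffleDr -!shuffleA [sh (mix s) (g k)]shuffleC.
Qed.

End FixedFeedback.

Lemma agree_phibar n (g g' : vser R m m) eta (s : ser) :
  (forall k, agree n (g k) (g' k)) -> agree n.+1 (phibar g eta s) (phibar g' eta s).
Proof.
move=> gg'; elim: eta => [|b eta IH] [|a v] //= vn.
case: (a == b) => //; case: (unlift ord0 b) => [k|]; last exact: IH v (leqW vn).
exact: agree_shuffle (gg' k) (agree_le (leqnSn n) IH) v vn.
Qed.

Lemma agree_mix_feedback n (g g' : vser R m m) (s : ser) :
  (forall k, agree n (g k) (g' k)) -> agree n.+1 (mix g s) (mix g' s).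
Proof.
move=> gg' w wn; apply: eq_bigr => k _; apply: eq_bigr => eta _.
by rewrite (agree_phibar _ _ gg').
Qed.

End MixedComposition.

Lemma sum_sub_uniq (V : nmodType) (T : eqType) (s1 s2 : seq T) (F : T -> V) :
  uniq s1 -> uniq s2 -> {subset s1 <= s2} ->
  {in s2, forall x, x \notin s1 -> F x = 0} ->
  \sum_(x <- s1) F x = \sum_(x <- s2) F x.
Proof.
move=> u1 u2 s12 F0.
rewrite [RHS](bigID (fun x => x \in s1)) /= [X in _ + X]big1_seq ?addr0; last first.
  by move=> x /andP [x1 x2]; apply: F0.
rewrite -[RHS]big_filter; apply/perm_big/uniq_perm; rewrite ?filter_uniq //.
by move=> x; rewrite mem_filter; case x1: (x \in s1); rewrite //= s12.
Qed.

Section Exponents.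
Variable q : nat.

Definition box N : seq (expo q) :=
  [seq toexp bb | bb <- enum {: {ffun 'I_q -> 'I_N.+1}}].

Definition expo_size (al : expo q) := (\sum_i al i)%N.
Definition expo_add (b c : expo q) : expo q := [ffun i => (b i + c i)%N].
Definition expo_sub (a b : expo q) : expo q := [ffun i => (a i - b i)%N].
Definition expo_le (b a : expo q) := [forall i, (b i <= a i)%N].

Lemma toexp_inj N : injective (@toexp q N).
Proof.
move=> b1 b2 /ffunP b12; apply/ffunP => i; apply: val_inj.
by have := b12 i; rewrite !ffunE.
Qed.

Lemma uniq_box N : uniq (box N).
Proof. by rewrite map_inj_uniq ?enum_uniq //; apply: toexp_inj. Qed.

Lemma mem_box N (al : expo q) : (al \in box N) = [forall i, (al i <= N)%N].
Proof.
apply/mapP/forallP => [[bb _ ->] i | alN]; first by rewrite ffunE -ltnS.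
exists [ffun i => inord (al i)]; first by rewrite mem_enum.
by apply/ffunP => i; rewrite !ffunE inordK // ltnS.
Qed.

Lemma big_box (V : nmodType) N (P : pred (expo q)) (F : expo q -> V) :
  \sum_(bb : {ffun 'I_q -> 'I_N.+1} | P (toexp bb)) F (toexp bb) =
  \sum_(al <- box N | P al) F al.
Proof. by rewrite big_map big_enum_cond. Qed.

Lemma leq_expo_size (al : expo q) i : (al i <= expo_size al)%N.
Proof. by rewrite /expo_size (bigD1 i) //= leq_addr. Qed.

Lemma expo_size_notin_box N (al : expo q) : al \notin box N -> (N < expo_size al)%N.
Proof.
rewrite mem_box negb_forall => /existsP [i]; rewrite -ltnNge => Nal.
exact: leq_trans Nal (leq_expo_size al i).
Qed.

Lemma expo_add_inj b : injective (expo_add b).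
Proof.
move=> c1 c2 /ffunP c12; apply/ffunP => i.
by have := c12 i; rewrite !ffunE => /addnI.
Qed.

Lemma expo_addC (b c : expo q) : expo_add b c = expo_add c b.
Proof. by apply/ffunP => i; rewrite !ffunE addnC. Qed.

Lemma expo_addKn (b c : expo q) : expo_sub (expo_add b c) b = c.
Proof. by apply/ffunP => i; rewrite !ffunE addKn. Qed.

Lemma expo_subnKC (b a : expo q) : expo_le b a -> expo_add b (expo_sub a b) = a.
Proof. by move=> /forallP ba; apply/ffunP => i; rewrite !ffunE subnKC. Qed.

Lemma expo_le_addr (b c : expo q) : expo_le b (expo_add b c).
Proof. by apply/forallP => i; rewrite ffunE leq_addr. Qed.

End Exponents.

Section WienerFliess.
Variables (R : realFieldType) (m q : nat).
Local Notation ser := (ser R m).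
Local Notation sh := (@shuffle R m).
Local Notation one := (@one_ser R m).

Lemma order_ge_shpow (s : ser) n : s [::] = 0 -> order_ge n (shpow s n).
Proof.
move=> s0; elim: n => [|n IH] //.
by apply: (@order_ge_shuffle _ _ 1) IH => -[].
Qed.

Lemma shpowD (s : ser) n1 n2 : shpow s (n1 + n2) = sh (shpow s n1) (shpow s n2).
Proof.
elim: n1 => [|n1 IH]; first by rewrite add0n shuffle1s.
by rewrite addSn /shpow /= -/(shpow s (n1 + n2)) IH shuffleA.
Qed.

Lemma agree_shpow n (s s' : ser) k : agree n s s' -> agree n (shpow s k) (shpow s' k).
Proof. by move=> ss'; elim: k => [|k IH] //; apply: agree_shuffle. Qed.

Lemma order_ge_spow (x : vser R m q) al : proper_ser x -> order_ge (expo_size al) (spow x al).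
Proof.
move=> x0; rewrite /expo_size -big_enum /spow.
elim: (enum 'I_q) => [|i l IH] /=; first by move=> v; rewrite big_nil.
by rewrite big_cons; apply: order_ge_shuffle => //; apply: order_ge_shpow.
Qed.

Lemma spowD (x : vser R m q) b c : spow x (expo_add b c) = sh (spow x b) (spow x c).
Proof.
rewrite /spow; elim: (enum 'I_q) => [|i l IH] /=; first by rewrite shuffle1s.
rewrite IH ffunE shpowD !shuffleA; congr (sh _ _).
by rewrite -!shuffleA (shuffleC (shpow (x i) (c i))).
Qed.

Lemma spow0 (x : vser R m q) : spow x (expo0 q) = one.
Proof.
by rewrite /spow; elim: (enum 'I_q) => [|i l IH] //=; rewrite IH ffunE shuffle1s.
Qed.

Lemma agree_spow n (x x' : vser R m q) al :
  (forall i, agree n (x i) (x' i)) -> agree n (spow x al) (spow x' al).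
Proof.
move=> xx'; rewrite /spow; elim: (enum 'I_q) => [|i l IH] //.
by apply: agree_shuffle => //; apply: agree_shpow.
Qed.

Lemma mix_spow (g : vser R m m) (x : vser R m q) al :
  mix g (spow x al) = spow (fun i => mix g (x i)) al.
Proof.
rewrite /spow; elim: (enum 'I_q) => [|i l IH] /=; first exact: mix1.
rewrite mix_shuffle IH; congr (sh _ _).
by elim: (al i) => [|k IHk] /=; rewrite ?mix1 // mix_shuffle IHk.
Qed.

Definition wf (dj : cser R q) (x : vser R m q) : ser := fun w =>
  \sum_(bb : {ffun 'I_q -> 'I_(size w).+1} | (\sum_i (bb i : nat) <= size w)%N)
     dj (toexp bb) * spow x (toexp bb) w.

Lemma wfcompE l (d : 'I_l -> cser R q) x j : wfcomp d x j = wf (d j) x.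
Proof. by []. Qed.

Lemma agree_wf n (dj : cser R q) (x x' : vser R m q) :
  (forall i, agree n (x i) (x' i)) -> agree n (wf dj x) (wf dj x').
Proof.
move=> xx' w wn; apply: eq_bigr => bb _.
by rewrite (agree_spow _ xx').
Qed.

Lemma wf_box N (dj : cser R q) (x : vser R m q) w : proper_ser x -> (size w <= N)%N ->
  wf dj x w = \sum_(al <- box q N) dj al * spow x al w.
Proof.
move=> x0 wN; have spow_small al : (size w < expo_size al)%N -> spow x al w = 0.
  exact: order_ge_spow.
rewrite /wf (eq_bigl (fun bb => expo_size (toexp bb) <= size w)%N); last first.
  by move=> bb; congr (_ <= _)%N; apply: eq_bigr => i _; rewrite ffunE.
rewrite (big_box (size w) (fun al => expo_size al <= size w)%N (fun al => dj al * spow x al w)).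
rewrite big_mkcond /=.
rewrite (eq_bigr (fun al => dj al * spow x al w)); last first.
  by move=> al _; case: leqP => // /spow_small ->; rewrite mulr0.
apply: sum_sub_uniq; rewrite ?uniq_box //.
  move=> al; rewrite !mem_box => /forallP alw; apply/forallP => i.
  exact: leq_trans (alw i) wN.
move=> al _ /expo_size_notin_box alw.
by rewrite spow_small ?mulr0.
Qed.

Lemma wf_one (x : vser R m q) : proper_ser x -> wf (@one_cser R q) x = one.
Proof.
move=> x0; apply: functional_extensionality => w.
rewrite (wf_box _ x0 (leqnn _)) (bigD1_seq (expo0 q)) ?uniq_box //=; last first.
  by rewrite mem_box; apply/forallP => i; rewrite ffunE.
rewrite /one_cser eqxx mul1r spow0 big1 ?addr0 // => al /negbTE ->.
by rewrite mul0r.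
Qed.

Lemma cauchy_box N (a b : cser R q) al : al \in box q N ->
  cauchy a b al = \sum_(be <- box q N | expo_le be al) a be * b (expo_sub al be).
Proof.
move=> alN; rewrite /cauchy.
rewrite (eq_big (fun bb => expo_le (toexp bb) al)
                (fun bb => a (toexp bb) * b (expo_sub al (toexp bb)))); first last.
- by move=> bb _; congr (_ * b _); apply/ffunP => i; rewrite !ffunE.
- by move=> bb; apply: eq_forallb => i; rewrite ffunE.
rewrite (big_box _ (fun be => expo_le be al) (fun be => a be * b (expo_sub al be))).
rewrite -[LHS]big_filter -[RHS]big_filter.
apply/perm_big/uniq_perm; rewrite ?filter_uniq ?uniq_box //.
move=> be; rewrite !mem_filter; case: (boolP (expo_le be al)) => //= /forallP beal.
move: alN; rewrite !mem_box => /forallP alN.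
by apply/idP/idP => _; apply/forallP => i; apply: leq_trans (beal i) _;
  rewrite ?alN ?leq_expo_size.
Qed.

Lemma sum_box_shift N (b : cser R q) (x : vser R m q) be w :
  proper_ser x -> (size w <= N)%N ->
  \sum_(al <- box q N | expo_le be al) b (expo_sub al be) * spow x al w =
  \sum_(c <- box q N) b c * spow x (expo_add be c) w.
Proof.
move=> x0 wN; rewrite -big_filter.
transitivity (\sum_(al <- map (expo_add be) (box q N)) b (expo_sub al be) * spow x al w).
  apply: sum_sub_uniq.
  - exact: filter_uniq (uniq_box _ _).
  - by rewrite map_inj_uniq ?uniq_box //; apply: expo_add_inj.
  - move=> al; rewrite mem_filter => /andP [beal alN]; apply/mapP.
    exists (expo_sub al be); last by rewrite expo_subnKC.
    move: alN; rewrite !mem_box => /forallP alN; apply/forallP => i.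
    by rewrite ffunE; apply: leq_trans (leq_subr _ _) (alN i).
  - move=> _ /mapP [c _ ->]; rewrite mem_filter expo_le_addr /= => /expo_size_notin_box Nbc.
    by rewrite (order_ge_spow x0) ?mulr0 //; apply: leq_ltn_trans wN Nbc.
by rewrite big_map; apply: eq_bigr => c _; rewrite expo_addKn.
Qed.

Lemma wf_cauchy (a b : cser R q) (x : vser R m q) : proper_ser x ->
  wf (cauchy a b) x = sh (wf a x) (wf b x).
Proof.
move=> x0; apply: functional_extensionality => w; set N := size w.
have boxN (dj : cser R q) :
    agree N (wf dj x) (fun v => \sum_(al <- box q N) dj al * spow x al v).
  by move=> v vN; rewrite (wf_box _ x0 vN).
transitivity (\sum_(be <- box q N) a be *
    \sum_(al <- box q N | expo_le be al) b (expo_sub al be) * spow x al w).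
  rewrite (wf_box _ x0 (leqnn N)) big_seq.
  under eq_bigr => al alN do rewrite (cauchy_box a b alN) mulr_suml big_mkcond /=.
  rewrite -big_seq exchange_big /=; apply: eq_bigr => be _.
  rewrite mulr_sumr [RHS]big_mkcond /=; apply: eq_bigr => al _.
  by case: ifP => _; rewrite ?mulr0 ?mul0r // mulrA.
under eq_bigr => be _ do rewrite (sum_box_shift _ _ x0 (leqnn N)) mulr_sumr.
rewrite (agree_shuffle (boxN a) (boxN b) (leqnn N)) shuffle_sumr exchange_big.
apply: eq_bigr => c _; rewrite shuffleZr shuffleC shuffle_sumr mulr_sumr.
by apply: eq_bigr => be _; rewrite shuffleZr -spowD expo_addC mulrCA.
Qed.

Lemma mix_wf (g : vser R m m) (dj : cser R q) (x : vser R m q) : proper_ser x ->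
  mix g (wf dj x) = wf dj (fun i => mix g (x i)).
Proof.
move=> x0; apply: functional_extensionality => w; set N := size w.
have gx0 : proper_ser (fun i => mix g (x i)) by move=> i; rewrite mix_nil.
have boxN : agree N (wf dj x) (fun v => \sum_(al <- box q N) dj al * spow x al v).
  by move=> v vN; rewrite (wf_box _ x0 vN).
rewrite (wf_box _ gx0 (leqnn N)) (agree_mix g boxN (leqnn N)) mix_sum.
by apply: eq_bigr => al _; rewrite mixZ mix_spow.
Qed.

End WienerFliess.

Section Feedback.
Variables (R : realFieldType) (m q : nat) (c : vser R m q) (d : 'I_m -> cser R q).

Lemma feedback_uniq (e1 e2 : vser R m q) :
  (forall j w, e1 j w = mixcomp c (wfcomp d e1) j w) ->
  (forall j w, e2 j w = mixcomp c (wfcomp d e2) j w) ->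
  forall j w, e1 j w = e2 j w.
Proof.
move=> e1P e2P; suff agree_n n : forall j, agree n (e1 j) (e2 j).
  by move=> j w; apply: (agree_n (size w)).
elim: n => [|n IH] j v vn.
  by case: v vn => // _; rewrite e1P e2P !mixcompE !mix_nil.
rewrite e1P e2P !mixcompE; apply: (agree_mix_feedback _ _ vn) => k.
by rewrite !wfcompE; apply: agree_wf.
Qed.

Lemma wfcomp_mixcomp_inverse (dinv : 'I_m -> cser R q) (ginv h : vser R m m) :
  proper_ser c ->
  (forall j, is_cauchy_inv (d j) (dinv j)) ->
  (forall j, is_shuffle_inv (wfcomp dinv c j) (ginv j)) ->
  (forall j w, h j w = mixcomp ginv h j w) ->
  wfcomp d (mixcomp c h) = h.
Proof.
move=> c0 dinvP ginvP hP; set e := mixcomp c h.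
have e0 : proper_ser e by move=> i; rewrite /e mixcompE mix_nil.
apply: functional_extensionality => j; rewrite wfcompE.
apply: (@shuffle_inv_uniq _ _ (wf (dinv j) e)).
  rewrite -wf_cauchy // (_ : cauchy _ _ = @one_cser R q) ?wf_one //.
  exact: functional_extensionality (dinvP j).
have -> : h j = mix h (ginv j) by apply: functional_extensionality; apply: hP.
have -> : wf (dinv j) e = mix h (wf (dinv j) c) by rewrite mix_wf.
rewrite -mix_shuffle (_ : shuffle _ _ = @one_ser R m) ?mix1 //.
exact: functional_extensionality (ginvP j).
Qed.

End Feedback.

Unset Implicit Arguments.

Theorem theorem18 (R : realFieldType) (m q : nat)
    (c : vser R m q) (d : 'I_m -> cser R q)
    (dinv : 'I_m -> cser R q) (ginv : vser R m m) (h : vser R m m) :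
  proper_ser c ->
  purely_improper d ->
  (* dinv = d^{-1}, componentwise Cauchy inverse *)
  (forall j, is_cauchy_inv (d j) (dinv j)) ->
  (* ginv = (d^{-1} o c)^{sh -1}, componentwise shuffle inverse *)
  (forall j, is_shuffle_inv (wfcomp dinv c j) (ginv j)) ->
  (* h = (d^{-1} o c)^{o -1}, i.e. h = (d^{-1} o c)^{sh -1} ~o delta_h *)
  (forall j w, h j w = mixcomp ginv h j w) ->
  let e := mixcomp c h in
  (forall j w, e j w = mixcomp c (wfcomp d e) j w) /\
  (forall e' : vser R m q, proper_ser e' ->
     (forall j w, e' j w = mixcomp c (wfcomp d e') j w) ->
     forall j w, e' j w = e j w).
Proof.
(* Pure improperness of [d] follows from the existence of [dinv], and
   properness of [e'] from the feedback equation. *)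
move=> c0 _ dinvP ginvP hP e.
have de_h : wfcomp d e = h := wfcomp_mixcomp_inverse c0 dinvP ginvP hP.
have eP : forall j w, e j w = mixcomp c (wfcomp d e) j w by move=> j w; rewrite de_h.
by split=> // e' _ e'P; apply: feedback_uniq.
Qed.
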